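(* Let $X$, $(S_n)$ be as in the context and assume Assumption (A) holds. Let $\nu\in \mathcal M_+(W_S)$ be a quasi-stationary distribution such that $\nu(\eta_S)>0$ and such that $\nu\{x:\ j_S(x)\leq \ell\}=1$ for some $\ell\geq 0$. Then the exponential absorption parameter of $\nu$ equals $\theta_{0,S}$.
   Context: Let $D$ be a measurable space, $\partial\notin D$, and $(X_n)_{n\in\mathbb Z_+}$ a Markov chain on $D\cup\{\partial\}$ for which $\partial$ is absorbing; $\tau_\partial=\inf\{n\ge0: X_n=\partial\}$; $\mathbb P_x,\mathbb E_x$ denote law and expectation given $X_0=x$, and $\mathbb P_\mu=\int\mathbb P_x\,\mu(dx)$. The sub-Markovian semigroup is $S_nf(x)=\mathbb E_x(f(X_n)\mathbbm 1_{n<\tau_\partial})$, $\mu S_nf=\int S_nf\,d\mu$. Functions are extended by $0$ outside their domain. $\mathcal M_+(D)$: finite nonnegative measures on $D$. For measurable $W:D\to[1,\infty)$, $\mathcal M(W)$ is the space of finite signed measures with $|\mu|(W)<\infty$, norm $\|\mu\|_W=|\mu|(W)$; $\mathcal M_+(W)$ its nonnegative part; $L^\infty(W)$: measurable $f$ with $\|f\|_W=\sup|f|/W<\infty$. $\theta_S(\mu):=\inf\{\theta\ge0:\liminf_n\theta^{-n}\mu S_n\mathbbm 1_D=0\}$, $\theta_S(x)=\theta_S(\delta_x)$, $\theta_{0,S}=\sup_x\theta_S(x)$; $j_S(\mu):=\inf\{\ell\ge0:\liminf_n n^{-\ell}\theta_{0,S}^{-n}\mu S_n\mathbbm 1_D=0\}$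 (with $\inf\emptyset=0$), $j_S(x)=j_S(\delta_x)$. A quasi-stationary distribution (QSD) is a probability measure $\nu$ on $D$ with $\mathbb P_\nu(X_n\in\cdot\mid n<\tau_\partial)=\nu$ for all $n\ge0$; then there is $\theta\in(0,1]$ with $\mathbb P_\nu(n<\tau_\partial)=\theta^n$ for all $n$, i.e. $\nu S_n=\theta^n\nu$; $\theta$ is its exponential absorption (convergence) parameter. Assumption (A): $\theta_{0,S}\in(0,1]$, $j_S$ is integer valued, and there exist a measurable $W_S:D\to[1,\infty)$, a finite or countable set $I_S$, probability measures $\nu_{S,i}\in\mathcal M(W_S)$ and non-identically zero nonnegative $\eta_{S,i}\in L^\infty(W_S)$ ($i\in I_S$) with $\sum_{i}\eta_{S,i}\nu_{S,i}(W_S)\in L^\infty(W_S)$, and $\alpha_{S,n}\to0$, such that for all $f\in L^\infty(W_S)$, $n\ge1$, $x\in D$: $\big|\theta_{0,S}^{-n}n^{-j_S(x)}\mathbb E_x(f(X_n)\mathbbm 1_{n<\tau_\partial})-\sum_{i}\eta_{S,i}(x)\nu_{S,i}(f)\big|\le\alpha_{S,n}W_S(x)\|f\|_{W_S}$. Then $\eta_S:=\sum_{i\in I_S}\eta_{S,i}$. *)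

From HB Require Import structures.
From mathcomp Require Import all_boot all_order all_algebra.
From mathcomp Require Import all_classical all_reals all_analysis.
Set Implicit Arguments. Unset Strict Implicit. Unset Printing Implicit Defensive.
Import Order.TTheory GRing.Theory Num.Theory.
Import numFieldNormedType.Exports.
Local Open Scope classical_set_scope.
Local Open Scope ring_scope.

(* The chain X on D u {partial} with partial absorbing is encoded by its
   sub-Markovian transition kernel K on D:  K x A = P_x(X_1 \in A), A \subset D
   (mass defect 1 - K x D = P_x(X_1 = partial)).                              *)

Section QSD.
Context {d : measure_display} {T : measurableType d} {R : realType}.
Variable K : R.-spker T ~> T.

(* S_n f (x) = E_x (f(X_n) 1_{n < tau}),  built by the Markov property
   S_{n+1} f (x) = int K(x,dy) S_n f (y).                                    *)
Fixpoint Ssg (n : nat) (f : T -> \bar R) : T -> \bar R :=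
  match n with
  | 0%N => f
  | n'.+1 => fun x => (\int[K x]_y Ssg n' f y)%E
  end.

Definition muS (mu : {measure set T -> \bar R}) (n : nat) (f : T -> \bar R)
  : \bar R := (\int[mu]_x Ssg n f x)%E.

Definition oneD : T -> \bar R := fun _ => 1%E.

(* theta_S(mu) = inf { theta >= 0 : liminf_n theta^{-n} mu S_n 1_D = 0 }
   (theta = 0 can be dropped) *)
Definition thetaS (mu : {measure set T -> \bar R}) : R :=
  inf [set th : R | 0 < th /\
        limn_einf (fun n => ((th ^- n)%:E * muS mu n oneD)%E) = 0%E].

Definition thetaSx (x : T) : R := thetaS (\d_x).

Definition theta0 : R := sup [set thetaSx x | x in [set: T]].

(* j_S(mu) = inf { l >= 0 : liminf_n n^{-l} theta0^{-n} mu S_n 1_D = 0 },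
   with inf of the empty set = 0 (which is mathcomp's convention for inf). *)
Definition jS (mu : {measure set T -> \bar R}) : R :=
  inf [set l : R | 0 <= l /\
        limn_einf (fun n => (((n%:R `^ l)^-1 * theta0 ^- n)%:E
                             * muS mu n oneD)%E) = 0%E].

Definition jSx (x : T) : R := jS (\d_x).

Definition LinfW (W : T -> R) (f : T -> R) : Prop :=
  measurable_fun [set: T] f /\ exists C : R, forall x, `|f x| <= C * W x.

Definition normW (W : T -> R) (f : T -> R) : R :=
  sup [set `|f x| / W x | x in [set: T]].

Definition inMW (W : T -> R) (mu : {measure set T -> \bar R}) : Prop :=
  (\int[mu]_x (W x)%:E < +oo)%E.

Definition sumI (I : set nat) (a : nat -> \bar R) : \bar R :=
  (\sum_(i <oo | i \in I) a i)%E.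

(* Assumption (A), with the data W_S, I_S, nu_{S,i}, eta_{S,i}, alpha_{S,n}
   made explicit (the index set I_S is a subset of nat). *)
Definition assumptionA (W : T -> R) (I : set nat) (nu : nat -> probability T R)
         (eta : nat -> T -> R) (alpha : nat -> R) : Prop :=
  0 < theta0 <= 1 /\
  (forall x, exists k : nat, jSx x = k%:R) /\
    [/\ (measurable_fun [set: T] W /\ (forall x, 1 <= W x)),
        (forall i, i \in I -> inMW W (nu i))
        /\
        (forall i, i \in I ->
           LinfW W (eta i) /\ (forall x, 0 <= eta i x) /\ exists x, eta i x != 0),
        (exists C : R, forall x,
           (sumI I (fun i => (eta i x)%:E * (\int[nu i]_y (W y)%:E)) <= (C * W x)%:E)%E),
        alpha n @[n --> \oo] --> 0 &
        forall f, LinfW W f -> forall (n : nat) x, (0 < n)%N ->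
          (`| ((theta0 ^- n * (n%:R `^ jSx x)^-1)%:E * Ssg n (fun y => (f y)%:E) x
               - sumI I (fun i => (eta i x)%:E * (\int[nu i]_y (f y)%:E))) |
           <= (alpha n * W x * normW W f)%:E)%E ].

Definition etaS (I : set nat) (eta : nat -> T -> R) (x : T) : \bar R :=
  sumI I (fun i => (eta i x)%:E).

(* quasi-stationary distribution: P_nu(X_n in A | n < tau) = nu(A) *)
Definition is_QSD (nu : probability T R) : Prop :=
  forall n : nat, (0 < muS nu n oneD)%E /\
    forall A, measurable A ->
      muS nu n (fun x => (\1_A x)%:E) = (nu A * muS nu n oneD)%E.

Definition abs_param (nu : probability T R) (th : R) : Prop :=
  0 < th <= 1 /\ forall n : nat, muS nu n oneD = (th ^+ n)%:E.

End QSD.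

(* Applying Assumption (A) to f = 1 and integrating against the
   quasi-stationary distribution nu, whose mass nu S_n 1 is theta^n, gives
     nu(eta_S) <= (theta / theta_0)^n + o(1)
   and, because j_S <= l nu-almost surely,
     (theta / theta_0)^n <= n^l (nu(eta_S) + o(1)).
   Since nu(eta_S) > 0 the first bound forces theta >= theta_0, and since a
   geometric sequence dominated by a polynomial has ratio at most 1 the second
   forces theta <= theta_0. *)
From HB Require Import structures.
From mathcomp Require Import all_boot all_order all_algebra.
From mathcomp Require Import all_classical all_reals all_analysis.
From mathcomp Require Import measurable_realfun ring lra.
Import Order.TTheory GRing.Theory Num.Theory.
Local Open Scope classical_set_scope.
Local Open Scope ring_scope.

Section growth.
Variable R : realType.

Lemma natr_powR_le_expr (n : nat) (l : R) :
  (0 < n)%N -> n%:R `^ l <= n%:R ^+ (Num.truncn l).+1.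
Proof.
move=> n0; rewrite -powR_mulrn ?ler0n //.
by apply: ler_powR; [rewrite ler1n | exact/ltW/truncnS_gt].
Qed.

Lemma expr_ge1_of_lower_bound (q E : R) (u : R^nat) :
  0 <= q -> 0 < E -> u n @[n --> \oo] --> 0 ->
  (\forall n \near \oo, E <= q ^+ n + u n) -> 1 <= q.
Proof.
move=> q0 E0 u0 Elow; rewrite leNgt; apply/negP => q1.
have qu0 : q ^+ n + u n @[n --> \oo] --> 0.
  by rewrite -[0]addr0; apply: cvgD => //; apply: cvg_expr; rewrite ger0_norm.
have [n [Eleq quE]] : exists n, E <= q ^+ n + u n /\ q ^+ n + u n < E.
  near \oo => n; exists n; split; near: n; [exact: Elow | exact: cvgr_lt _ qu0 _ E0].
by move: (le_lt_trans Eleq quE); rewrite ltxx.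
Unshelve. all: by end_near.
Qed.

Lemma expr_le1_of_powR_bound (q B l : R) :
  (\forall n \near \oo, q ^+ n <= B * n%:R `^ l) -> q <= 1.
Proof.
move=> qB; rewrite leNgt; apply/negP => q1.
set k := (Num.truncn l).+1.
have c0 : 0 < ln q := ln_gt0 q1.
set a := ln q ^+ k.+1 / k.+1`!%:R.
have a0 : 0 < a by rewrite divr_gt0 ?exprn_gt0 ?ltr0n ?fact_gt0.
have [n [n0 qnB Ban]] :
    exists n, [/\ (0 < n)%N, q ^+ n <= B * n%:R `^ l & B / a < n%:R].
  near \oo => n; exists n; split; near: n; [by [] | exact: qB | exact: nbhs_infty_gtr].
have nR0 : 0 < n%:R :> R by rewrite ltr0n.
(* q ^+ n = expR (n * ln q) dominates the degree k.+1 term of the exponential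
   series. *)
have anB : a * n%:R ^+ k.+1 <= B * n%:R ^+ k.
  have q0 : 0 < q by lra.
  have expq : q ^+ n = expR (n%:R * ln q) by rewrite expRM_natl lnK.
  apply: le_trans (le_trans qnB _); last first.
    apply: ler_wpM2l; last exact: natr_powR_le_expr.
    have : 0 < B * n%:R `^ l by apply: lt_le_trans qnB; rewrite exprn_gt0.
    by rewrite pmulr_lgt0 ?powR_gt0 // => /ltW.
  rewrite expq; apply: le_trans (expR_ge1Dxn k (ltW (mulr_gt0 nR0 c0))).
  by apply: ler_wpDl => //; rewrite /a exprMn le_eqVlt; apply/orP; left; apply/eqP; ring.
have nk0 : 0 < n%:R ^+ k :> R by rewrite exprn_gt0.
move: anB; rewrite exprSr mulrA mulrAC ler_pM2r // mulrC -ler_pdivlMr // => nBa.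
by move: (lt_le_trans Ban nBa); rewrite ltxx.
Unshelve. all: by end_near.
Qed.

End growth.

Section ge0_integral.
Local Open Scope ereal_scope.
Context {d} {T : measurableType d} {R : realType} (mu : {measure set T -> \bar R}).

Lemma ge0_integralDZr (b : R) (f g : T -> \bar R) : (0 <= b)%R ->
  (forall x, 0 <= f x) -> measurable_fun [set: T] f ->
  (forall x, 0 <= g x) -> measurable_fun [set: T] g ->
  \int[mu]_x (f x + b%:E * g x) = \int[mu]_x f x + b%:E * \int[mu]_x g x.
Proof.
move=> b0 f0 mf g0 mg; rewrite ge0_integralD //; last 2 first.
- by move=> x _; apply: mule_ge0.
- exact: measurable_funeM.
by rewrite ge0_integralZl.
Qed.

End ge0_integral.

Section sub_markov_semigroup.
Local Open Scope ereal_scope.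
Context {d} {T : measurableType d} {R : realType} (K : R.-spker T ~> T).

Lemma Ssg_oneD_ge0 n x : 0 <= Ssg K n oneD x.
Proof.
by elim: n x => [|n IH] x /=; [rewrite /oneD | exact: integral_ge0].
Qed.

Lemma measurable_Ssg_oneD n : measurable_fun [set: T] (Ssg K n oneD).
Proof.
elim: n => [|n IH] /=; first exact: measurable_cst.
apply: measurable_fun_integral_kernel => //; last exact: Ssg_oneD_ge0.
by move=> U mU; exact: measurable_kernel.
Qed.

Context {nu : probability T R}.

Lemma muS_oneD0 : muS K nu 0 oneD = 1.
Proof. by rewrite /muS /= /oneD integral_cst // mul1e; exact: probability_setT. Qed.

Lemma muS_oneD1_fin_num : muS K nu 1 oneD \is a fin_num.
Proof.
rewrite ge0_fin_numE; last by apply: integral_ge0 => x _; exact: (Ssg_oneD_ge0 1).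
apply: (@le_lt_trans _ _ (\int[nu]_x (cst 1 x))); last first.
  by rewrite integral_cst // mul1e (le_lt_trans (probability_le1 _ _)) ?ltry.
apply: ge0_le_integral => //.
- by move=> x _; exact: (Ssg_oneD_ge0 1).
- exact: (measurable_Ssg_oneD 1).
- by move=> x _ /=; rewrite /oneD integral_cst // mul1e sprob_kernel_le1.
Qed.

Lemma QSD_integral_kernel : is_QSD K nu ->
  forall g : T -> \bar R, (forall x, 0 <= g x) -> measurable_fun [set: T] g ->
  \int[nu]_x \int[K x]_y g y = muS K nu 1 oneD * \int[nu]_x g x.
Proof.
move=> nuQSD g g0 mg.
have [c0 c1] : (0 <= fine (muS K nu 1 oneD))%R /\
               (fine (muS K nu 1 oneD))%:E = muS K nu 1 oneD.
  rewrite fineK ?muS_oneD1_fin_num // fine_ge0 //.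
  by apply: integral_ge0 => x _; exact: (Ssg_oneD_ge0 1).
(* The measure [A |-> \int[nu]_x K x A] is the composition of [nu], seen as a
   kernel from [unit], with [K]; quasi-stationarity at time 1 makes it
   [muS K nu 1 oneD] times [nu]. *)
pose L := @kprobability _ _ unit T R (fun _ => nu : pprobability T R) (measurable_cst _).
pose nuK := mkcomp L (kernel.kernel_snd K) tt.
transitivity (\int[nuK]_y g y); first by rewrite integral_kcomp.
rewrite (@eq_measure_integral _ _ _ _ (mscale (NngNum c0) nu)); last first.
  move=> A mA _; rewrite /nuK /= /kcomp /= [RHS]/mscale /= muleC c1.
  rewrite -(nuQSD 1%N).2 // /muS /=; apply: eq_integral => x _.
  by rewrite integral_indic // setIT.
by rewrite ge0_integral_mscale //= c1.
Qed.

Lemma QSD_muS_oneD : is_QSD K nu ->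
  forall n, muS K nu n oneD = ((fine (muS K nu 1 oneD)) ^+ n)%:E.
Proof.
move=> nuQSD; elim=> [|n IH]; first by rewrite muS_oneD0.
rewrite /muS /= QSD_integral_kernel //; last 2 first.
- exact: Ssg_oneD_ge0.
- exact: measurable_Ssg_oneD.
by rewrite -/(muS K nu n oneD) IH exprS EFinM fineK // muS_oneD1_fin_num.
Qed.

End sub_markov_semigroup.

Lemma lee_distl_EFin {R : realType} {u v : \bar R} {r : R} :
  (`|u - v| <= r%:E)%E -> (v <= u + r%:E)%E /\ (u <= v + r%:E)%E.
Proof.
case: u v => [u| |] [v| |] //=; rewrite ?lee_fin.
by rewrite ler_norml => /andP[? ?]; split; lra.
Qed.

Lemma normW_cst1 {d} {T : measurableType d} {R : realType} (W : T -> R) (x : T) :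
  (forall y, 1 <= W y) -> 0 <= normW W (cst 1) <= 1.
Proof.
move=> W_ge1.
have ub : ubound [set `|1| / W y | y in [set: T]] 1.
  by move=> _ [y _ <-]; rewrite normr1 mul1r invf_le1 // (lt_le_trans ltr01 (W_ge1 y)).
apply/andP; split; last by apply: ge_sup => //; exists (`|1| / W x), x.
apply: le_trans (ub_le_sup _ _); last by exists x.
  by rewrite divr_ge0 // (le_trans ler01 (W_ge1 x)).
by exists 1.
Qed.

Section assumptionA.
Local Open Scope ereal_scope.
Context {d} {T : measurableType d} {R : realType} {K : R.-spker T ~> T}.
Context {W : T -> R} {I : set nat} {nuS : nat -> probability T R}.
Context {eta : nat -> T -> R} {alpha : nat -> R}.
Hypothesis hA : assumptionA K W I nuS eta alpha.

Local Notation th0 := (theta0 K).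

Let W_ge1 x : (1 <= W x)%R.
Proof. by case: hA => _ [_ [[_ W1] _ _ _ _]]. Qed.

Let W_gt0 x : (0 < W x)%R.
Proof. exact: lt_le_trans ltr01 (W_ge1 x). Qed.

Let theta0_gt0 : (0 < th0)%R.
Proof. by case: hA => /andP[]. Qed.

Let alpha_cvg0 : alpha n @[n --> \oo] --> 0%R.
Proof. by case: hA => _ [_ [_ _ _ ? _]]. Qed.

Lemma etaS_ge0 x : 0 <= etaS I eta x.
Proof.
case: hA => _ [_ [_ [_ etaP] _ _ _]].
by apply: nneseries_ge0 => i _ iI; rewrite lee_fin; exact: (etaP i iI).2.1.
Qed.

Lemma measurable_etaS : measurable_fun [set: T] (etaS I eta).
Proof.
case: hA => _ [_ [_ [_ etaP] _ _ _]].
apply: (@ge0_emeasurable_sum _ _ _ _ (fun i x => (eta i x)%:E) [pred i | i \in I]).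
  by move=> i x _ iI; rewrite lee_fin; exact: (etaP i iI).2.1.
by move=> i iI; apply/measurable_EFinP; exact: (etaP i iI).1.1.
Qed.

Lemma Ssg_oneD_approx n x : (0 < n)%N ->
  `|(th0 ^- n * (n%:R `^ jSx K x)^-1)%:E * Ssg K n oneD x - etaS I eta x|
    <= (`|alpha n| * W x)%:E.
Proof.
case: hA => _ [_ [_ _ _ _ bnd]] n0.
have L1 : LinfW W (cst 1%R).
  by split; [exact: measurable_cst | exists 1%R => y; rewrite normr1 mul1r].
have := bnd _ L1 n x n0.
have nuS1 i : \int[nuS i]_y (cst 1%R y)%:E = 1.
  rewrite (_ : (fun y => _) = cst 1) // integral_cst // mul1e.
  exact: probability_setT.
rewrite (_ : (fun i => _) = fun i => (eta i x)%:E); last first.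
  by apply/funext => i; rewrite nuS1 mule1.
move/le_trans; apply; rewrite lee_fin.
have /andP[nW0 nW1] := normW_cst1 W x W_ge1.
apply: (@le_trans _ _ (`|alpha n| * W x * normW W (cst 1))%R).
  by rewrite ler_wpM2r // ler_wpM2r ?ler_norm // ltW.
by rewrite -[leRHS]mulr1 ler_wpM2l // mulr_ge0 // ltW.
Qed.

Lemma jSx_ge0 x : (0 <= jSx K x)%R.
Proof. by case: hA => _ [/(_ x)[k ->] _]; rewrite ler0n. Qed.

Lemma etaS_le_Ssg_oneD n x : (0 < n)%N ->
  etaS I eta x <= (th0 ^- n)%:E * Ssg K n oneD x + (`|alpha n|)%:E * (W x)%:E.
Proof.
move=> n0; have [+ _] := lee_distl_EFin (Ssg_oneD_approx n x n0).
move/le_trans; apply; rewrite -EFinM leeD2r // lee_wpmul2r ?Ssg_oneD_ge0 //.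
rewrite lee_fin ler_piMr //; first by rewrite invr_ge0 exprn_ge0 // ltW.
rewrite invf_le1 ?powR_gt0 ?ltr0n // -[leLHS](powRr0 n%:R).
by apply: ler_powR; [rewrite ler1n | exact: jSx_ge0].
Qed.

Lemma Ssg_oneD_le_etaS n x : (0 < n)%N ->
  (th0 ^- n)%:E * Ssg K n oneD x
    <= (n%:R `^ jSx K x)%:E * (etaS I eta x + (`|alpha n|)%:E * (W x)%:E).
Proof.
move=> n0; have [_ +] := lee_distl_EFin (Ssg_oneD_approx n x n0).
have nj0 : (0 < n%:R `^ jSx K x)%R by rewrite powR_gt0 // ltr0n.
have nj0E : 0 <= (n%:R `^ jSx K x)%:E by rewrite lee_fin ltW.
rewrite -EFinM => /(lee_wpmul2l nj0E) /(le_trans _); apply.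
by rewrite muleA -EFinM mulrCA divff ?mulr1 // gt_eqF.
Qed.

Context {nu : probability T R}.
Hypotheses (nuW : inMW W nu) (nuQSD : is_QSD K nu).

Local Notation th := (fine (muS K nu 1 oneD)).
Local Notation IW := (fine (\int[nu]_x (W x)%:E)).

Let measurable_WE : measurable_fun [set: T] (fun x => (W x)%:E).
Proof. by case: hA => _ [_ [[mW _] _ _ _ _]]; exact/measurable_EFinP. Qed.

Let integral_WE : \int[nu]_x (W x)%:E = IW%:E.
Proof.
by rewrite fineK // ge0_fin_numE // integral_ge0 // => x _; rewrite lee_fin ltW.
Qed.

Let IW_ge0 : (0 <= IW)%R.
Proof. by rewrite fine_ge0 // integral_ge0 // => x _; rewrite lee_fin ltW. Qed.

Let th_ge0 : (0 <= th)%R.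
Proof. by rewrite fine_ge0 // integral_ge0 // => x _; exact: (Ssg_oneD_ge0 K 1). Qed.

Let theta0_Ssg_ge0 n x : 0 <= (th0 ^- n)%:E * Ssg K n oneD x.
Proof.
by apply: mule_ge0; [rewrite lee_fin invr_ge0 exprn_ge0 // ltW | exact: Ssg_oneD_ge0].
Qed.

Let measurable_theta0_Ssg n :
  measurable_fun [set: T] (fun x => (th0 ^- n)%:E * Ssg K n oneD x).
Proof. exact/measurable_funeM/measurable_Ssg_oneD. Qed.

Let integral_theta0_Ssg n :
  \int[nu]_x ((th0 ^- n)%:E * Ssg K n oneD x) = ((th / th0) ^+ n)%:E.
Proof.
rewrite ge0_integralZl //; last 3 first.
- exact: measurable_Ssg_oneD.
- by move=> x _; exact: Ssg_oneD_ge0.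
- by rewrite lee_fin invr_ge0 exprn_ge0 // ltW.
by rewrite -/(muS K nu n oneD) QSD_muS_oneD // -EFinM expr_div_n mulrC.
Qed.

Lemma integral_etaS_le n : (0 < n)%N ->
  \int[nu]_x etaS I eta x <= ((th / th0) ^+ n + `|alpha n| * IW)%:E.
Proof.
move=> n0; rewrite EFinD EFinM -integral_theta0_Ssg -integral_WE.
rewrite -ge0_integralDZr //; last by move=> x; rewrite lee_fin ltW.
apply: ge0_le_integral => //.
- by move=> x _; exact: etaS_ge0.
- exact: measurable_etaS.
- by apply: emeasurable_funD => //; exact: measurable_funeM.
- by move=> x _; exact: etaS_le_Ssg_oneD.
Qed.

Lemma expr_le_integral_etaS n {A : set T} {l : R} :
  measurable A -> nu A = 1 -> (forall x, A x -> (jSx K x <= l)%R) -> (0 < n)%N ->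
  ((th / th0) ^+ n)%:E
    <= (n%:R `^ l)%:E * (\int[nu]_x etaS I eta x + (`|alpha n| * IW)%:E).
Proof.
move=> mA nuA jA n0.
have rhs_ge0 x : 0 <= etaS I eta x + (`|alpha n|)%:E * (W x)%:E.
  by apply: adde_ge0; [exact: etaS_ge0 | rewrite -EFinM lee_fin mulr_ge0 // ltW].
have measurable_rhs :
    measurable_fun [set: T] (fun x => etaS I eta x + (`|alpha n|)%:E * (W x)%:E).
  by apply: emeasurable_funD; [exact: measurable_etaS | exact: measurable_funeM].
rewrite EFinM -integral_WE -integral_theta0_Ssg -ge0_integralDZr //; last 3 first.
- exact: etaS_ge0.
- exact: measurable_etaS.
- by move=> x; rewrite lee_fin ltW.
rewrite -ge0_integralZl ?lee_fin ?powR_ge0 //.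
apply: ae_ge0_le_integral => //.
- by move=> x _; apply: mule_ge0; rewrite ?lee_fin ?powR_ge0.
- exact: measurable_funeM.
exists (~` A); split; first exact: measurableC.
  by have := probability_setC nu mA; rewrite nuA subee.
move=> x /= + Ax; apply => _.
apply: le_trans (Ssg_oneD_le_etaS n x n0) _.
apply: lee_wpmul2r => //; rewrite lee_fin.
by apply: ler_powR; [rewrite ler1n | exact: jA].
Qed.

Lemma integral_etaS_fin_num : \int[nu]_x etaS I eta x \is a fin_num.
Proof.
rewrite ge0_fin_numE; last by apply: integral_ge0 => x _; exact: etaS_ge0.
exact: le_lt_trans (integral_etaS_le 1 isT) (ltry _).
Qed.

Lemma theta0_le_QSD : 0 < \int[nu]_x etaS I eta x -> (th0 <= th)%R.
Proof.
move=> etaS_gt0; rewrite -[leLHS]mul1r -ler_pdivlMr //.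
apply: (@expr_ge1_of_lower_bound _ _ (fine (\int[nu]_x etaS I eta x))
                                 (fun n => `|alpha n| * IW)%R).
- by rewrite divr_ge0 // ltW.
- by rewrite -lte_fin fineK // integral_etaS_fin_num.
- by have := cvgMr_tmp (b := IW) (cvg_norm alpha_cvg0); rewrite normr0 mul0r; apply.
- near=> n; rewrite -lee_fin fineK ?integral_etaS_fin_num //.
  by apply: integral_etaS_le; near: n; exact: nbhs_infty_gt.
Unshelve. all: by end_near.
Qed.

Lemma QSD_le_theta0 {A : set T} {l : R} :
  measurable A -> nu A = 1 -> (forall x, A x -> (jSx K x <= l)%R) -> (th <= th0)%R.
Proof.
move=> mA nuA jA; rewrite -[leRHS]mul1r -ler_pdivrMr //.
apply: (@expr_le1_of_powR_bound _ _ (fine (\int[nu]_x etaS I eta x) + IW) l).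
near=> n; rewrite -lee_fin.
apply: le_trans (expr_le_integral_etaS n mA nuA jA _) _.
  by near: n; exact: nbhs_infty_gt.
rewrite -[X in (_ * (X + _))]fineK ?integral_etaS_fin_num // -EFinD -EFinM lee_fin.
rewrite mulrC ler_wpM2r ?powR_ge0 // lerD2l ler_piMl ?IW_ge0 //.
by near: n; exact: cvgr0_norm_le alpha_cvg0 _ ltr01.
Unshelve. all: by end_near.
Qed.

End assumptionA.

Theorem proposition2p2 (d : measure_display) (T : measurableType d) (R : realType)
  (K : R.-spker T ~> T)
  (W : T -> R) (I : set nat) (nuS : nat -> probability T R)
  (eta : nat -> T -> R) (alpha : nat -> R) :
  assumptionA K W I nuS eta alpha ->
  forall (nu : probability T R),
    inMW W nu ->
    is_QSD K nu ->
    (0 < \int[nu]_x etaS I eta x)%E ->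
    (exists l : R, 0 <= l /\
       exists A : set T, [/\ measurable A, nu A = 1%E &
                             forall x, A x -> jSx K x <= l]) ->
    abs_param K nu (theta0 K).
Proof.
move=> hA nu nuW nuQSD etaS_gt0 [l [_ [A [mA nuA jA]]]].
have thetaE : fine (muS K nu 1 oneD) = theta0 K.
  apply/le_anti; rewrite (QSD_le_theta0 hA nuW nuQSD mA nuA jA).
  by rewrite (theta0_le_QSD hA nuW nuQSD etaS_gt0).
split; first by case: hA.
by move=> n; rewrite QSD_muS_oneD // thetaE.
Qed.
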